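(* Consider a shallow ReLU network without biases with widths $n_0,n_1,n_2$ and two activation patterns $A_1,A_2\in\{0,1\}^{n_1}$. Let $r_i=\sum_j A_{ij}$, $s=\sum_jA_{1j}A_{2j}$ and $t=r_1+r_2-2s$. Then the ideal $J^{\mathbf{A}}$ contains: (1) all $(r_1+1)$-minors of $M_1$; (2) all $(r_2+1)$-minors of $M_2$; (3) all $(n_1+1)$-minors of $[M_1\mid M_2]$ and of $[M_1^\top\mid M_2^\top]$; (4) all $(t+1)$-minors of $M_1-M_2$.
   Context: Parameters are $W^{(1)}\in\mathbb{R}^{n_1\times n_0}$, $W^{(2)}\in\mathbb{R}^{n_2\times n_1}$, and $M_{A}(\theta)=W^{(2)}\operatorname{diag}(A)W^{(1)}$. $J^{\mathbf{A}}\subseteq\mathbb{C}[m^{(1)}_{ij},m^{(2)}_{ij}]$ is the ideal of all polynomials vanishing on the Zariski closure in $\mathbb{C}^{n_2\times n_0}\times\mathbb{C}^{n_2\times n_0}$ of $\{(M_{A_1}(\theta),M_{A_2}(\theta)):\theta\}$, where $M_1=(m^{(1)}_{ij})$ and $M_2=(m^{(2)}_{ij})$ are the matrices of coordinates. $[M_1\mid M_2]$ denotes horizontal concatenation. *)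

From HB Require Import structures.
From mathcomp Require Import all_boot all_order all_algebra.
From mathcomp Require Import Rstruct.
From mathcomp Require Import complex.
From mathcomp Require Import mpoly.

Set Implicit Arguments.
Unset Strict Implicit.
Unset Printing Implicit Defensive.

Import Order.TTheory GRing.Theory Num.Theory.
Local Open Scope ring_scope.

Definition CC : Type := (Rdefinitions.R)[i].

Definition nvars (n2 n0 : nat) : nat := (n2 * n0 + n2 * n0)%N.

Definition PR (n2 n0 : nat) := {mpoly CC[nvars n2 n0]}.

Definition Mvar1 (n2 n0 : nat) : 'M[PR n2 n0]_(n2, n0) :=
  \matrix_(i, j) 'X_(lshift (n2 * n0) (mxvec_index i j)).
Definition Mvar2 (n2 n0 : nat) : 'M[PR n2 n0]_(n2, n0) :=
  \matrix_(i, j) 'X_(rshift (n2 * n0) (mxvec_index i j)).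

(* A point (X1, X2) of C^{n2 x n0} x C^{n2 x n0} as an assignment of the
   coordinates: m^(1)_ij |-> X1 i j, m^(2)_ij |-> X2 i j. *)
Definition pt (n2 n0 : nat) (X1 X2 : 'M[CC]_(n2, n0)) : 'I_(nvars n2 n0) -> CC :=
  fun k => match split k with
           | inl a => mxvec X1 0 a
           | inr b => mxvec X2 0 b
           end.

Definition diagA (n1 : nat) (A : 'I_n1 -> bool) : 'M[Rdefinitions.R]_n1 :=
  diag_mx (\row_j (A j)%:R).

Definition MA (n0 n1 n2 : nat) (A : 'I_n1 -> bool)
  (W1 : 'M[Rdefinitions.R]_(n1, n0)) (W2 : 'M[Rdefinitions.R]_(n2, n1))
  : 'M[CC]_(n2, n0) :=
  map_mx (fun x : Rdefinitions.R => (x%:C)%C) (W2 *m diagA A *m W1).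

Definition param_image (n0 n1 n2 : nat) (A1 A2 : 'I_n1 -> bool)
  (X1 X2 : 'M[CC]_(n2, n0)) : Prop :=
  exists (W1 : 'M[Rdefinitions.R]_(n1, n0)) (W2 : 'M[Rdefinitions.R]_(n2, n1)),
    X1 = MA A1 W1 W2 /\ X2 = MA A2 W1 W2.

Definition zariski_closure (n2 n0 : nat)
  (S : 'M[CC]_(n2, n0) -> 'M[CC]_(n2, n0) -> Prop)
  (X1 X2 : 'M[CC]_(n2, n0)) : Prop :=
  forall p : PR n2 n0,
    (forall Y1 Y2, S Y1 Y2 -> p.@[pt Y1 Y2] = 0) -> p.@[pt X1 X2] = 0.

Definition JA (n0 n1 n2 : nat) (A1 A2 : 'I_n1 -> bool) (p : PR n2 n0) : Prop :=
  forall X1 X2, @zariski_closure n2 n0 (@param_image n0 n1 n2 A1 A2) X1 X2 -> p.@[pt X1 X2] = 0.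

Definition is_minor (T : comNzRingType) (k p q : nat) (M : 'M[T]_(p, q)) (d : T)
  : Prop :=
  exists (f : 'I_k -> 'I_p) (g : 'I_k -> 'I_q),
    {homo f : x y / (x < y)%N} /\ {homo g : x y / (x < y)%N} /\
    d = \det (mxsub f g M).

Definition nactive (n1 : nat) (A : 'I_n1 -> bool) : nat := (\sum_(j < n1) A j)%N.
Definition ncommon (n1 : nat) (A1 A2 : 'I_n1 -> bool) : nat :=
  (\sum_(j < n1) (A1 j && A2 j))%N.

(* For every real theta, M_{A1}(theta) = W2 diag(A1) W1 has rank at most r1, the
   matrices [M_{A1} | M_{A2}] = W2 [diag(A1) W1 | diag(A2) W1] and its transposed
   analogue have rank at most n1, and M_{A1} - M_{A2} = W2 diag(A1 - A2) W1 has
   rank at most the number t of neurons on which A1 and A2 differ.  A minor of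
   size exceeding the rank vanishes, so each listed minor of the coordinate
   matrices is a polynomial vanishing on the parametrized set, hence on its
   Zariski closure. *)
From HB Require Import structures.
From mathcomp Require Import all_boot all_order all_algebra.
From mathcomp Require Import Rstruct.
From mathcomp Require Import complex.
From mathcomp Require Import mpoly.

Set Implicit Arguments.
Unset Strict Implicit.
Unset Printing Implicit Defensive.

Import Order.TTheory GRing.Theory Num.Theory.
Local Open Scope ring_scope.

Section MinorsAndRank.
Variable F : fieldType.

Lemma mxrank_mxsub k p q (M : 'M[F]_(p, q)) (f : 'I_k -> 'I_p) (g : 'I_k -> 'I_q) :
  (\rank (mxsub f g M) <= \rank M)%N.
Proof.
rewrite mxsubrc; apply: leq_trans (mxrankS (rowsub_sub _ _)) _.
rewrite -mxrank_tr trmx_mxsub -[M in X in (_ <= X)%N]trmxK mxrank_tr.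
exact/mxrankS/rowsub_sub.
Qed.

Lemma det_mxsub_rank_lt k p q (M : 'M[F]_(p, q)) (f : 'I_k -> 'I_p) (g : 'I_k -> 'I_q) :
  (\rank M < k)%N -> \det (mxsub f g M) = 0.
Proof.
move=> rankM_lt; apply/eqP; apply: contraTT rankM_lt => det_neq0.
have /mxrank_unit <- : mxsub f g M \in unitmx by rewrite unitmxE unitfE.
by rewrite -leqNgt mxrank_mxsub.
Qed.

Lemma mxrank_diag_mx n (d : 'rV[F]_n) :
  (\rank (diag_mx d) <= \sum_j ((d 0 j != 0)%R : nat))%N.
Proof.
rewrite diag_mx_sum_delta.
apply: (big_ind2 (fun (D : 'M[F]_n) (c : nat) => \rank D <= c)%N).
- by rewrite mxrank0.
- by move=> D1 D2 c1 c2 le1 le2; rewrite (leq_trans (mxrank_add _ _)) ?leq_add.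
- move=> j _; have [->|d_neq0] := eqVneq (d 0 j) 0; first by rewrite scale0r mxrank0.
  by rewrite mxrank_scale_nz // mxrank_delta.
Qed.

Lemma mxrank_mul_diag_mx m n p (B : 'M[F]_(m, n)) (d : 'rV[F]_n) (C : 'M[F]_(n, p)) :
  (\rank (B *m diag_mx d *m C) <= \sum_j ((d 0 j != 0)%R : nat))%N.
Proof.
apply: leq_trans (mxrankM_maxl _ _) _; apply: leq_trans (mxrankM_maxr _ _) _.
exact: mxrank_diag_mx.
Qed.

Lemma mxrank_row_mx_mul m n p1 p2 (B : 'M[F]_(m, n))
    (C1 : 'M[F]_(n, p1)) (C2 : 'M[F]_(n, p2)) :
  (\rank (row_mx (B *m C1) (B *m C2)) <= n)%N.
Proof. by rewrite -mul_mx_row (leq_trans (mxrankM_maxl _ _)) ?rank_leq_col. Qed.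

End MinorsAndRank.

Lemma sum_neq_bool (I : Type) (r : seq I) (a b : I -> bool) :
  (\sum_(i <- r) (a i != b i)
   = \sum_(i <- r) a i + \sum_(i <- r) b i - 2 * \sum_(i <- r) (a i && b i))%N.
Proof.
apply/esym/eqP; rewrite -(eqn_add2r (2 * \sum_(i <- r) (a i && b i))) subnK.
  rewrite big_distrr -!big_split /=.
  by apply/eqP/eq_bigr => i _; case: (a i); case: (b i).
by rewrite big_distrr -big_split leq_sum // => i _; case: (a i); case: (b i).
Qed.

Lemma meval_det_mxsub (R : comNzRingType) (n k p q : nat) (v : 'I_n -> R)
    (P : 'M[{mpoly R[n]}]_(p, q)) (f : 'I_k -> 'I_p) (g : 'I_k -> 'I_q) :
  (\det (mxsub f g P)).@[v] = \det (mxsub f g (map_mx (meval v) P)).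
Proof. by rewrite -map_mxsub det_map_mx. Qed.

Section CoordinateMatrices.
Variables n2 n0 : nat.

Lemma map_Mvar1_pt (X1 X2 : 'M[CC]_(n2, n0)) :
  map_mx (meval (pt X1 X2)) (Mvar1 n2 n0) = X1.
Proof.
apply/matrixP => i j; rewrite !mxE mevalXU /pt.
by rewrite (unsplitK (inl _ : 'I__ + 'I__)) mxvecE.
Qed.

Lemma map_Mvar2_pt (X1 X2 : 'M[CC]_(n2, n0)) :
  map_mx (meval (pt X1 X2)) (Mvar2 n2 n0) = X2.
Proof.
apply/matrixP => i j; rewrite !mxE mevalXU /pt.
by rewrite (unsplitK (inr _ : 'I__ + 'I__)) mxvecE.
Qed.

End CoordinateMatrices.

Section Network.
Variables (n0 n1 n2 : nat) (A1 A2 : 'I_n1 -> bool).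

Lemma JA_param_vanishing (P : PR n2 n0) :
  (forall W1 W2, P.@[pt (MA A1 W1 W2) (MA A2 W1 W2)] = 0) -> JA A1 A2 P.
Proof. by move=> P0 X1 X2 X_closure; apply: X_closure => Y1 Y2 [W1 [W2 [-> ->]]]. Qed.

Lemma JA_minor_rank_lt k p q (P : 'M[PR n2 n0]_(p, q)) :
  (forall W1 W2, \rank (map_mx (meval (pt (MA A1 W1 W2) (MA A2 W1 W2))) P) < k)%N ->
  forall d, is_minor k P d -> JA A1 A2 d.
Proof.
move=> rank_lt d [f [g [_ [_ ->]]]]; apply: JA_param_vanishing => W1 W2.
by rewrite meval_det_mxsub det_mxsub_rank_lt.
Qed.

Lemma mxrank_MA (A : 'I_n1 -> bool)
    (W1 : 'M[Rdefinitions.R]_(n1, n0)) (W2 : 'M[Rdefinitions.R]_(n2, n1)) :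
  (\rank (MA A W1 W2) <= nactive A)%N.
Proof.
rewrite mxrank_map (leq_trans (mxrank_mul_diag_mx _ _ _)) //.
by apply: leq_sum => j _; rewrite mxE; case: (A j); rewrite ?eqxx ?oner_eq0.
Qed.

Lemma mxrank_row_MA
    (W1 : 'M[Rdefinitions.R]_(n1, n0)) (W2 : 'M[Rdefinitions.R]_(n2, n1)) :
  (\rank (row_mx (MA A1 W1 W2) (MA A2 W1 W2)) <= n1)%N.
Proof. by rewrite -map_row_mx mxrank_map -!mulmxA mxrank_row_mx_mul. Qed.

Lemma mxrank_row_trMA
    (W1 : 'M[Rdefinitions.R]_(n1, n0)) (W2 : 'M[Rdefinitions.R]_(n2, n1)) :
  (\rank (row_mx (MA A1 W1 W2)^T (MA A2 W1 W2)^T) <= n1)%N.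
Proof. by rewrite !map_trmx -map_row_mx mxrank_map !trmx_mul mxrank_row_mx_mul. Qed.

Lemma mxrank_MAB
    (W1 : 'M[Rdefinitions.R]_(n1, n0)) (W2 : 'M[Rdefinitions.R]_(n2, n1)) :
  (\rank (MA A1 W1 W2 - MA A2 W1 W2)%R
   <= nactive A1 + nactive A2 - 2 * ncommon A1 A2)%N.
Proof.
have diagAB : diagA A1 - diagA A2 = diag_mx (\row_j ((A1 j)%:R - (A2 j)%:R)).
  by apply/matrixP => i j; rewrite !mxE; case: eqP; rewrite ?subr0.
rewrite -map_mxB mxrank_map -mulmxBl -mulmxBr diagAB.
rewrite (leq_trans (mxrank_mul_diag_mx _ _ _)) // /nactive /ncommon -sum_neq_bool.
apply: leq_sum => j _.
rewrite mxE; case: (A1 j); case: (A2 j);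
  by rewrite ?subrr ?eqxx ?subr0 ?sub0r ?oppr_eq0 ?oner_eq0.
Qed.

End Network.

Theorem theorem6p2 (n0 n1 n2 : nat) (A1 A2 : 'I_n1 -> bool) :
  let r1 := nactive A1 in
  let r2 := nactive A2 in
  let s := ncommon A1 A2 in
  let t := (r1 + r2 - 2 * s)%N in
  let M1 := Mvar1 n2 n0 in
  let M2 := Mvar2 n2 n0 in
  let J := @JA n0 n1 n2 A1 A2 in
  (forall d, is_minor r1.+1 M1 d -> J d) /\
  (forall d, is_minor r2.+1 M2 d -> J d) /\
  (forall d, is_minor n1.+1 (row_mx M1 M2) d -> J d) /\
  (forall d, is_minor n1.+1 (row_mx M1^T M2^T) d -> J d) /\
  (forall d, is_minor t.+1 (M1 - M2) d -> J d).
Proof.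
move=> r1 r2 s t M1 M2 J.
split; [|split; [|split; [|split]]]; apply: JA_minor_rank_lt => W1 W2.
- by rewrite map_Mvar1_pt ltnS mxrank_MA.
- by rewrite map_Mvar2_pt ltnS mxrank_MA.
- by rewrite map_row_mx map_Mvar1_pt map_Mvar2_pt ltnS mxrank_row_MA.
- by rewrite map_row_mx -!map_trmx map_Mvar1_pt map_Mvar2_pt ltnS mxrank_row_trMA.
- by rewrite map_mxB map_Mvar1_pt map_Mvar2_pt ltnS mxrank_MAB.
Qed.
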